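(* Let $q$ be a prime power, $\mathbb{F}$ an extension field of $\mathbb{F}_q$, $1\le k\le n$, $\ell\ge1$. Let $C$ be an $[n,k]_{\mathbb{F}}$ code that is $\mathrm{GKP}(\ell)$, with generator matrix $G\in\mathbb{F}^{k\times n}$. Let $V_1,\dots,V_\ell$ be $\mathbb{F}_q$-subspaces of $\mathbb{F}_q^n$, each of dimension at most $k$. Then \[ \dim_{\mathbb{F}}\Big(\bigcap_{i\in[\ell]}G_{V_i}\Big)=\max_{P_1\sqcup\cdots\sqcup P_s=[\ell]}\Big(\sum_{i\in[s]}\dim_{\mathbb{F}_q}\Big(\bigcap_{j\in P_i}V_j\Big)-(s-1)k\Big), \] the maximum being over all partitions of $[\ell]$ into nonempty parts.
   Context: An $[n,k]_{\mathbb{F}}$ code is a $k$-dimensional subspace $C\subseteq\mathbb{F}^n$; $G$ is a generator matrix if $C=\{G^T\bm{u}\}$. For an $\mathbb{F}_q$-subspace $V\subseteq\mathbb{F}_q^n$, $G_V\subseteq\mathbb{F}^k$ is the $\mathbb{F}$-column span of $GA$ for any $A\in\mathbb{F}_q^{n\times\dim V}$ with $\mathbb{F}_q$-column span $V$. $C$ is MRD if every nonzero codeword $\bm{v}$ satisfies $\dim_{\mathbb{F}_q}\mathrm{span}_{\mathbb{F}_q}\{v_1,\dots,v_n\}\ge n-k+1$. A kernel pattern $(V_1,\dots,V_k)$ (subspaces of $\mathbb{F}_q^n$) is generic if $\dim(\bigcap_{i\in\Omega}V_i)\le k-|\Omega|$ for all nonempty $\Omega\subseteq[k]$, and has order $\ell$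 if exactly $\ell$ distinct nonzero subspaces occur among them; $C$ attains it if for full-rank $A_i$ with column span $V_i$ there is an invertible $M$ with rows $\bm{m}_i$ and $\bm{m}_iGA_i=0$ for all $i$. $C$ is $\mathrm{GKP}(\ell)$ if it is MRD and attains all generic kernel patterns of order at most $\ell$. *)

From HB Require Import structures.
From mathcomp Require Import all_boot all_order all_algebra.
Set Implicit Arguments. Unset Strict Implicit. Unset Printing Implicit Defensive.
Import Order.TTheory GRing.Theory Num.Theory.
Local Open Scope ring_scope.

Section Codes.
(* K plays the role of F_q (a finite field); F is an extension field of K,
   given through the field embedding iota : K -> F. *)
Variables (K : finFieldType) (F : fieldType) (iota : {rmorphism K -> F}).
Variables (n k : nat).

Definition Fq_indep (S : {set 'I_n}) (v : 'rV[F]_n) : Prop :=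
  forall a : 'I_n -> K,
    \sum_(i in S) iota (a i) * v 0 i = 0 -> forall i, i \in S -> a i = 0.

(* dim_{F_q} span_{F_q}{v_1,..,v_n} >= d  iff some d of the entries are
   F_q-linearly independent. *)
Definition Fq_rank_ge (v : 'rV[F]_n) (d : nat) : Prop :=
  exists S : {set 'I_n}, (d <= #|S|)%N /\ Fq_indep S v.

(* The code C = { u G } (row convention) generated by G : 'M_(k,n) is MRD. *)
Definition MRD (G : 'M[F]_(k, n)) : Prop :=
  forall u : 'rV[F]_k, u *m G != 0 -> Fq_rank_ge (u *m G) (n - k + 1).

(* G_V : subspace of F^k spanned by the columns of G A, where the columns of
   A span V; here V (a subspace of F_q^n) is the row space of B, and G_V is
   returned as the row space of (G A)^T = iota(B) G^T. *)
Definition GV (G : 'M[F]_(k, n)) (B : 'M[K]_n) : 'M[F]_(n, k) :=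
  map_mx iota B *m G^T.

Definition generic_pattern (V : 'I_k -> 'M[K]_n) : Prop :=
  forall Om : {set 'I_k}, Om != set0 ->
    (\rank (\bigcap_(i in Om) V i)%MS <= k - #|Om|)%N.

Definition pattern_order (V : 'I_k -> 'M[K]_n) : nat :=
  #|[set <<V i>>%MS | i in [set i : 'I_k | V i != 0]]|.

(* C attains the pattern: there is an invertible M with rows m_i such that
   m_i G A_i = 0, where the columns of A_i span V_i (the condition only
   depends on the column span of A_i; we use the rows of V i as spanning
   vectors). *)
Definition attains (G : 'M[F]_(k, n)) (V : 'I_k -> 'M[K]_n) : Prop :=
  exists M : 'M[F]_k, M \in unitmx /\
    forall i : 'I_k, row i M *m G *m (map_mx iota (V i))^T = 0.

Definition GKP (l : nat) (G : 'M[F]_(k, n)) : Prop :=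
  MRD G /\
  forall V : 'I_k -> 'M[K]_n,
    generic_pattern V -> (pattern_order V <= l)%N -> attains G V.

End Codes.

Definition partition_value (K : finFieldType) (n k l : nat)
  (V : 'I_l -> 'M[K]_n) (P : {set {set 'I_l}}) : int :=
  (\sum_(B in P) (\rank (\bigcap_(j in B) V j)%MS)%:Z) - (#|P|%:Z - 1) * k%:Z.

(* Lower bound: since C is MRD, W |-> G_W preserves the dimension of every
   subspace of dimension at most k, so a block B of a partition puts a subspace
   of dimension dim (cap_{j in B} V_j) inside cap_{j in B} G_{V_j}; intersecting
   s subspaces of F^k loses at most (s-1)k dimensions.
   Upper bound: S |-> dim (cap_{j in S} V_j) is supermodular on intersecting
   sets, so for a maximal weighting c with sum_{i in S} c_i + dim (cap_S V) <= k
   for all nonempty S, the tight sets are closed under intersecting unions and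
   the maximal ones partition [l], with value k - sum c. The kernel pattern
   repeating each V_i exactly c_i times (padded with zeros) is generic of order
   at most l; attaining it gives min(k, sum c) independent vectors orthogonal to
   cap G_{V_i}. *)

From HB Require Import structures.
From mathcomp Require Import all_boot all_order all_algebra zify.
Set Implicit Arguments. Unset Strict Implicit. Unset Printing Implicit Defensive.

Lemma sum_setUI (T : finType) (c : T -> nat) (S S' : {set T}) :
  \sum_(i in S :|: S') c i + \sum_(i in S :&: S') c i =
  \sum_(i in S) c i + \sum_(i in S') c i.
Proof.
rewrite !(big_mkcond (fun i => i \in _)) -!big_split /=; apply: eq_bigr => i _.
by rewrite !inE; case: (i \in S); case: (i \in S') => /=; lia.
Qed.

Section TightPartition.
Variables (T : finType) (k : nat) (g : {set T} -> nat).
Hypothesis g_le : forall S, S != set0 -> g S <= k.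
Hypothesis g_supermodular : forall S S', S :&: S' != set0 ->
  g S + g S' <= g (S :|: S') + g (S :&: S').

Definition feasible (c : T -> nat) :=
  forall S : {set T}, S != set0 -> \sum_(i in S) c i + g S <= k.

Definition tight (c : T -> nat) (S : {set T}) :=
  (S != set0) && (\sum_(i in S) c i + g S == k).

Lemma feasible_le c i : feasible c -> c i <= k.
Proof.
have set1_neq0 : [set i] != set0 by apply/set0Pn; exists i; rewrite inE.
by move/(_ _ set1_neq0); rewrite big_set1; lia.
Qed.

Lemma exists_max_feasible :
  exists2 c, feasible c & forall c', feasible c' -> \sum_i c' i <= \sum_i c i.
Proof.
(* feasible weights are bounded by k, hence range over a finite type *)
pose val_ff (f : {ffun T -> 'I_k.+1}) i := nat_of_ord (f i).
pose ff_feasible f :=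
  [forall (S : {set T} | S != set0), \sum_(i in S) val_ff f i + g S <= k].
have feasible0 : ff_feasible [ffun=> ord0].
  by apply/forall_inP => S /g_le; rewrite big1 // => i _; rewrite /val_ff ffunE.
have [f /forall_inP f_feas f_max] := arg_maxnP (fun f => \sum_i val_ff f i) feasible0.
exists (val_ff f) => // c' c'_feas.
pose f' : {ffun T -> 'I_k.+1} := [ffun i => inord (c' i)].
have c'E : val_ff f' =1 c'.
  by move=> i; rewrite /val_ff ffunE inordK // ltnS feasible_le.
have sumE (S : {pred T}) : \sum_(i in S) val_ff f' i = \sum_(i in S) c' i.
  by apply: eq_bigr => i _; exact: c'E.
suff /f_max : ff_feasible f' by rewrite (sumE T).
by apply/forall_inP => S; rewrite sumE; exact: c'_feas.
Qed.

Lemma max_feasible_covered c :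
    feasible c -> (forall c', feasible c' -> \sum_i c' i <= \sum_i c i) ->
  forall i, exists S, tight c S && (i \in S).
Proof.
move=> c_feas c_max i; apply/existsP; apply: contraT; rewrite negb_exists.
move=> /forallP not_tight; pose c' j := c j + (j == i).
have sum_c' (S : {set T}) : \sum_(j in S) c' j = \sum_(j in S) c j + (i \in S).
  rewrite big_split /=; congr addn; case: (boolP (i \in S)) => iS.
    by rewrite (bigD1 i) //= eqxx big1 // => j /andP [_ /negPf ->].
  by rewrite big1 // => j jS; case: eqP jS iS => // -> ->.
suff /c_max : feasible c'.
  by have := sum_c' setT; rewrite inE !(eq_bigl _ _ (@in_setT T)); lia.
move=> S S_neq0; rewrite sum_c'; have := c_feas S S_neq0.
have := not_tight S; rewrite /tight S_neq0 /=.
by case: (i \in S); rewrite /= ?andbT ?addn0 // => /eqP; lia.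
Qed.

Lemma tight_setU c S S' : feasible c -> tight c S -> tight c S' ->
  S :&: S' != set0 -> tight c (S :|: S').
Proof.
move=> c_feas /andP [S_neq0 /eqP tS] /andP [_ /eqP tS'] SS'_neq0.
have SUS'_neq0 : S :|: S' != set0 by rewrite setU_eq0 negb_and S_neq0.
rewrite /tight SUS'_neq0 eqn_leq c_feas //=.
have := c_feas _ SS'_neq0; have := g_supermodular SS'_neq0.
have := sum_setUI c S S'; lia.
Qed.

Lemma maxset_tight_partition c : feasible c ->
    (forall i, exists S, tight c S && (i \in S)) ->
  partition [set B | maxset (tight c) B] [set: T].
Proof.
move=> c_feas covered; apply/and3P; split.
- apply/eqP/setP => i; rewrite inE; have [S /andP [tS iS]] := covered i.
  have [B maxB SB] := maxset_exists tS.
  by apply/bigcupP; exists B; rewrite ?inE // (subsetP SB).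
- apply/trivIsetP => B B'; rewrite !inE => maxB maxB' neqBB'.
  apply: contraR neqBB'; rewrite -setI_eq0 => BB'_neq0.
  have tBB' := tight_setU c_feas (maxsetp maxB) (maxsetp maxB') BB'_neq0.
  by rewrite -(maxsetsup maxB tBB' (subsetUl _ _)) (maxsetsup maxB' tBB' (subsetUr _ _)).
- by rewrite in_set; apply/negP => /maxsetp /andP [/eqP].
Qed.

Lemma exists_tight_partition : exists c (P : {set {set T}}),
  [/\ feasible c, partition P [set: T] &
      forall B, B \in P -> \sum_(i in B) c i + g B = k].
Proof.
have [c c_feas c_max] := exists_max_feasible.
have covered := max_feasible_covered c_feas c_max.
exists c, [set B | maxset (tight c) B]; split => //.
  exact: maxset_tight_partition.
by move=> B; rewrite inE => /maxsetp /andP [_ /eqP].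
Qed.
End TightPartition.

Lemma exists_seq_count_le (T : finType) (k : nat) (c : T -> nat) :
  exists s : seq T, size s = minn k (\sum_i c i) /\ forall x, count_mem x s <= c x.
Proof.
pose L := flatten [seq nseq (c i) i | i <- enum T].
have count_L x : count_mem x L = c x.
  rewrite count_flatten -map_comp sumnE big_map big_enum /= (bigD1 x) //=.
  rewrite count_nseq /= eqxx mul1n big1 ?addn0 // => i /negPf neq_ix.
  by rewrite count_nseq /= neq_ix.
have size_L : size L = \sum_i c i.
  rewrite size_flatten /shape -map_comp sumnE big_map big_enum.
  by under eq_bigr do rewrite /= size_nseq.
exists (take k L); split; first by rewrite size_take_min size_L.
by move=> x; rewrite -count_L -[in X in _ <= X](cat_take_drop k L) count_cat leq_addr.
Qed.

Lemma card_nth_fibre (T : eqType) (k : nat) (x0 x : T) (s : seq T) : size s <= k ->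
  #|[set j : 'I_k | (j < size s) && (nth x0 s j == x)]| = count_mem x s.
Proof.
move=> size_s; rewrite -sum1_card -sum1_count (big_nth x0).
rewrite (big_nat_widen _ _ _ _ _ size_s) big_mkord.
by apply: eq_bigl => j; rewrite inE andbC.
Qed.

Import Order.TTheory GRing.Theory Num.Theory.
Local Open Scope ring_scope.

Lemma exists_row_supported (R : fieldType) m n (B : 'M[R]_(m, n)) (S : {set 'I_n}) :
  (#|~: S| < m)%N ->
  exists2 y : 'rV_m, y != 0 & forall j, j \notin S -> (y *m B) 0 j = 0.
Proof.
move=> small_compl; pose B' := colsub (enum_val : 'I_#|~: S| -> 'I_n) B.
have : kermx B' != 0.
  rewrite kermx_eq0; apply: contraTN small_compl => /eqP <-.
  by rewrite -leqNgt rank_leq_col.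
rewrite -nz_row_eq0 => y_neq0; exists (nz_row (kermx B')) => // j jS.
have jS' : j \in ~: S by rewrite inE.
have /sub_kermxP : (nz_row (kermx B') <= kermx B')%MS by exact: nz_row_sub.
rewrite mulmx_colsub => /matrixP /(_ 0 (enum_rank_in jS' j)).
by rewrite mxE [RHS]mxE enum_rankK_in.
Qed.

Lemma exists_row_free_supmx (R : fieldType) m n k (W : 'M[R]_(m, n)) :
  (\rank W <= k <= n)%N -> exists B : 'M_(k, n), row_free B /\ (W <= B)%MS.
Proof.
case/andP=> rWk kn; exists (pid_mx k *m row_ebase W); split.
  by rewrite /row_free mxrankMfree ?row_free_unit ?row_ebase_unit // rank_pid_mx.
have pid_rk : pid_mx (\rank W) =
    (pid_mx (\rank W) : 'M[R]_(m, k)) *m (pid_mx k : 'M[R]_(k, n)).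
  by rewrite mul_pid_mx (minn_idPl rWk) (minn_idPr rWk).
by rewrite -{1}(mulmx_ebase W) pid_rk !mulmxA -(mulmxA _ (pid_mx k)) submxMl.
Qed.

Lemma mxrank_bigcap_ge (R : fieldType) m (I : Type) (s : seq I) (Y : I -> 'M[R]_m) :
  \sum_(x <- s) (\rank (Y x))%:Z - ((size s)%:Z - 1) * m%:Z
    <= (\rank (\bigcap_(x <- s) Y x)%MS)%:Z.
Proof.
elim: s => [|x s IH]; first by rewrite !big_nil mxrank1 sub0r mulN1r opprK.
rewrite !big_cons /= -[(size s).+1]addn1.
have := mxrank_sum_cap (Y x) (\bigcap_(x <- s) Y x)%MS.
have := rank_leq_col (Y x + \bigcap_(x <- s) Y x)%MS.
move: IH; set S := \sum_(_ <- _) _; set b := \rank (\bigcap_(_ <- _) _)%MS.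
set c := \rank (_ :&: _)%MS; set d := \rank (_ + _)%MS; lia.
Qed.

Definition bigcap_rank (R : fieldType) m (I : finType) (V : I -> 'M[R]_m)
  (S : {set I}) : nat := \rank (\bigcap_(j in S) V j)%MS.

Lemma bigcap_rank_supermodular (R : fieldType) m (I : finType)
    (V : I -> 'M[R]_m) (S S' : {set I}) :
  (bigcap_rank V S + bigcap_rank V S' <=
   bigcap_rank V (S :|: S') + bigcap_rank V (S :&: S'))%N.
Proof.
have capS (j : I) (A : {set I}) : j \in A -> (\bigcap_(i in A) V i <= V j)%MS.
  by move=> jA; exact: bigcapmx_inf jA (submx_refl _).
rewrite -mxrank_sum_cap addnC leq_add //; apply: mxrankS; apply/sub_bigcapmxP => j.
  rewrite inE => /orP [jS | jS'].
    exact: submx_trans (capmxSl _ _) (capS j S jS).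
  exact: submx_trans (capmxSr _ _) (capS j S' jS').
rewrite inE => /andP [jS jS']; rewrite addsmx_sub.
by rewrite (capS j S jS) (capS j S' jS').
Qed.

Lemma mxrank_row_annihilated (R : fieldType) k p m (M : 'M[R]_k) (A : 'M[R]_(k, p)) :
    M \in unitmx -> (m <= k)%N ->
    (forall j : 'I_k, (j < m)%N -> row j M *m A = 0) ->
  (\rank A + m <= k)%N.
Proof.
move=> M_unit mk M_A.
have row_pid_M (j : 'I_k) :
    row j ((pid_mx m : 'M_k) *m M) = if (j < m)%N then row j M else 0.
  apply/rowP => t; rewrite !mxE (bigD1 j) //= big1 ?addr0 => [|i /negPf neq_ij].
    by rewrite mxE eqxx /=; case: (j < m)%N; rewrite ?mul1r ?mul0r !mxE.
  by rewrite mxE val_eqE eq_sym neq_ij mul0r.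
have : ((pid_mx m : 'M_k) *m M) *m A = 0.
  apply/row_matrixP => j; rewrite row_mul row0 row_pid_M.
  by case: ifP => [/M_A | _]; rewrite ?mul0mx.
move/mulmx0_rank_max; rewrite mxrankMfree ?row_free_unit // rank_pid_mx //.
by rewrite addnC.
Qed.

Section MRD.
Variables (K : finFieldType) (F : fieldType) (iota : {rmorphism K -> F}).
Variables (n k : nat).

Lemma Fq_indep_orthogonal (S : {set 'I_n}) (v : 'rV[F]_n) (a : 'rV[K]_n) :
    Fq_indep iota S v -> (forall j, j \notin S -> a 0 j = 0) ->
  v *m (map_mx iota a)^T = 0 -> a = 0.
Proof.
move=> v_indep a_supp /matrixP /(_ 0 0); rewrite !mxE => v_a.
have a_S : {in S, forall j, a 0 j = 0}.
  apply: v_indep; rewrite -[RHS]v_a [RHS](bigID [in S]) /= [X in _ + X]big1 ?addr0.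
    by apply: eq_bigr => j _; rewrite !mxE mulrC.
  by move=> j jS; rewrite !mxE a_supp ?rmorph0 ?mulr0.
by apply/rowP => j; rewrite mxE; case: (boolP (j \in S)) => [/a_S | /a_supp].
Qed.

Lemma MRD_unitmx (G : 'M[F]_(k, n)) (B : 'M[K]_(k, n)) :
  MRD iota G -> row_free G -> row_free B -> G *m (map_mx iota B)^T \in unitmx.
Proof.
move=> G_MRD G_free B_free; rewrite -row_free_unit -kermx_eq0.
apply: contraT => ker_neq0; pose u := nz_row (kermx (G *m (map_mx iota B)^T)).
have u_neq0 : u != 0 by rewrite nz_row_eq0.
have /sub_kermxP u_ker : (u <= kermx (G *m (map_mx iota B)^T))%MS.
  exact: nz_row_sub.
have [S [S_large v_indep]] : Fq_rank_ge iota (u *m G) (n - k + 1).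
  by apply: G_MRD; rewrite mulmx_free_eq0.
have [|y y_neq0 y_supp] := exists_row_supported B (S := S).
  by have := cardsC S; rewrite card_ord; lia.
suff /eqP : y *m B = 0 by rewrite mulmx_free_eq0 // (negPf y_neq0).
apply: Fq_indep_orthogonal v_indep y_supp _.
by rewrite map_mxM trmx_mul mulmxA -(mulmxA u) u_ker mul0mx.
Qed.

Lemma GV_submx (G : 'M[F]_(k, n)) (W W' : 'M[K]_n) :
  (W <= W')%MS -> (GV iota G W <= GV iota G W')%MS.
Proof. by case/submxP => X ->; rewrite /GV map_mxM -mulmxA submxMl. Qed.

Lemma mxrank_GV (G : 'M[F]_(k, n)) (W : 'M[K]_n) :
    MRD iota G -> row_free G -> (\rank W <= k <= n)%N ->
  \rank (GV iota G W) = \rank W.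
Proof.
move=> G_MRD G_free /exists_row_free_supmx [B [B_free /submxP [X ->]]].
rewrite /GV map_mxM -mulmxA mxrankMfree ?mxrank_map ?mxrankMfree //.
by rewrite row_free_unit -unitmx_tr trmx_mul trmxK MRD_unitmx.
Qed.

Lemma partition_value_le_rank (l : nat) (G : 'M[F]_(k, n)) (V : 'I_l -> 'M[K]_n)
    (P : {set {set 'I_l}}) :
    MRD iota G -> row_free G -> (k <= n)%N -> (forall i, \rank (V i) <= k)%N ->
    partition P [set: 'I_l] ->
  partition_value k V P <= (\rank (\bigcap_(i < l) <<GV iota G (V i)>>)%MS)%:Z.
Proof.
move=> G_MRD G_free kn V_small /and3P [/eqP P_cover _ P_set0].
pose Y (B : {set 'I_l}) := (\bigcap_(i in B) <<GV iota G (V i)>>)%MS.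
have rank_Y B : B \in P -> (bigcap_rank V B <= \rank (Y B))%N.
  move=> BP; have /set0Pn [i iB] : B != set0 by apply: contraNneq P_set0 => <-.
  have capV_small : (bigcap_rank V B <= k)%N.
    exact: leq_trans (mxrankS (bigcapmx_inf i iB (submx_refl _))) (V_small i).
  rewrite /bigcap_rank -(mxrank_GV G_MRD G_free) ?capV_small //.
  apply/mxrankS/sub_bigcapmxP.
  by move=> j jB; rewrite genmxE GV_submx // (bigcapmx_inf j jB (submx_refl _)).
have capY_sub : (\bigcap_(B in P) Y B <= \bigcap_(i < l) <<GV iota G (V i)>>)%MS.
  apply/sub_bigcapmxP => i _; have /bigcupP [B BP iB] : i \in cover P.
    by rewrite P_cover inE.
  apply: bigcapmx_inf BP _; exact: bigcapmx_inf iB (submx_refl _).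
apply: le_trans (_ : _ <= (\rank (\bigcap_(B in P) Y B)%MS)%:Z) _; last first.
  by rewrite lez_nat mxrankS.
have := mxrank_bigcap_ge (enum P) Y; rewrite !big_enum /= -cardE.
apply: le_trans; rewrite /partition_value lerD2r.
by apply: ler_sum => B BP; rewrite lez_nat rank_Y.
Qed.
End MRD.

Section PatternOfSeq.
Variables (K : finFieldType) (n k l : nat) (V : 'I_l -> 'M[K]_n).
Variables (s : seq 'I_l) (i0 : 'I_l).

Definition pattern_of_seq (j : 'I_k) : 'M[K]_n :=
  if (j < size s)%N then V (nth i0 s j) else 0.

Lemma pattern_order_of_seq : (pattern_order pattern_of_seq <= l)%N.
Proof.
apply: leq_trans (_ : #|[set <<V x>>%MS | x in [set: 'I_l]]| <= l)%N; last first.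
  by apply: leq_trans (leq_imset_card _ _) _; rewrite cardsT card_ord.
apply/subset_leq_card/subsetP => X /imsetP [j]; rewrite inE /pattern_of_seq.
by case: ifP => [_ _ -> | _]; [apply: imset_f; rewrite inE | rewrite eqxx].
Qed.

Lemma generic_pattern_of_seq (c : 'I_l -> nat) :
    (size s <= k)%N -> (forall x, count_mem x s <= c x)%N ->
    feasible k (bigcap_rank V) c ->
  generic_pattern pattern_of_seq.
Proof.
move=> size_s count_s c_feas Om Om_neq0.
have [Om_small | /forall_inPn [j jOm j_large]] :=
  boolP [forall (j | j \in Om), j < size s]%N.
  move/forall_inP: Om_small => Om_small.
  pose sg (j : 'I_k) := nth i0 s j; pose S := sg @: Om.
  have S_neq0 : S != set0.
    by case/set0Pn: Om_neq0 => j jOm; apply/set0Pn; exists (sg j); apply: imset_f.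
  have rank_cap : (\rank (\bigcap_(j in Om) pattern_of_seq j)%MS <= bigcap_rank V S)%N.
    apply/mxrankS/sub_bigcapmxP => x /imsetP [j jOm ->].
    apply: (@bigcapmx_inf _ _ j _ _ _ pattern_of_seq _ jOm).
    by rewrite /pattern_of_seq Om_small.
  have card_Om : (#|Om| <= \sum_(x in S) c x)%N.
    rewrite -sum1_card (partition_big sg (mem S)) /=; last first.
      by move=> j jOm; apply: imset_f.
    apply: leq_sum => x _; apply: leq_trans (count_s x).
    rewrite sum1dep_card -(card_nth_fibre i0 x size_s).
    apply/subset_leq_card/subsetP => j.
    by rewrite !inE => /andP [/Om_small -> ->].
  have := c_feas S S_neq0; lia.
have : (\rank (\bigcap_(j in Om) pattern_of_seq j)%MS <= \rank (pattern_of_seq j))%N.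
  exact/mxrankS/bigcapmx_inf/submx_refl.
by rewrite /pattern_of_seq (negPf j_large) mxrank0 leqn0 => /eqP ->.
Qed.
End PatternOfSeq.

Section UpperBound.
Variables (K : finFieldType) (F : fieldType) (iota : {rmorphism K -> F}).
Variables (n k l : nat) (G : 'M[F]_(k, n)) (V : 'I_l -> 'M[K]_n).

Lemma mxrank_bigcap_GV_le (c : 'I_l -> nat) :
    (0 < l)%N -> GKP iota l G -> feasible k (bigcap_rank V) c ->
  (\rank (\bigcap_(i < l) <<GV iota G (V i)>>)%MS + minn k (\sum_i c i) <= k)%N.
Proof.
move=> l_gt0 [_ G_attains] c_feas; pose i0 := Ordinal l_gt0.
have [s [size_s count_s]] := exists_seq_count_le k c.
have s_small : (size s <= k)%N by rewrite size_s geq_minl.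
pose W : 'I_k -> 'M[K]_n := pattern_of_seq V s i0.
have [M [M_unit M_W]] := G_attains W
  (generic_pattern_of_seq i0 s_small count_s c_feas) (pattern_order_of_seq _ _ _ _).
rewrite -size_s -mxrank_tr; apply: mxrank_row_annihilated M_unit s_small _.
move=> j j_small; set D := (\bigcap_(i < l) _)%MS.
have : (D <= <<GV iota G (V (nth i0 s j))>>)%MS.
  exact: (bigcapmx_inf _ isT (submx_refl _)).
rewrite genmxE => /submxP [X ->]; rewrite /GV !trmx_mul trmxK !mulmxA.
by have := M_W j; rewrite /W /pattern_of_seq j_small => ->; rewrite mul0mx.
Qed.

Lemma partition_value_tight (c : 'I_l -> nat) (P : {set {set 'I_l}}) :
    partition P [set: 'I_l] ->
    (forall B, B \in P -> \sum_(i in B) c i + bigcap_rank V B = k)%N ->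
  partition_value k V P = k%:Z - (\sum_i c i)%:Z.
Proof.
move=> P_part P_tight.
have sum_c : (\sum_i c i = \sum_(B in P) \sum_(i in B) c i)%N.
  by rewrite -(set_partition_big _ P_part); apply: eq_bigl => i; rewrite inE.
have : (\sum_(B in P) (\sum_(i in B) c i + bigcap_rank V B) = #|P| * k)%N.
  by rewrite (eq_bigr _ P_tight) sum_nat_const.
rewrite big_split /= -sum_c /partition_value.
rewrite -(big_morph Posz PoszD (erefl 0%:Z)) /=.
set g := (\sum_(B in P) _)%N; set N := (\sum_i c i)%N; lia.
Qed.
End UpperBound.

Theorem mainTheorem15 (K : finFieldType) (F : fieldType)
  (iota : {rmorphism K -> F}) (n k l : nat)
  (hk : (1 <= k)%N) (hkn : (k <= n)%N) (hl : (1 <= l)%N)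
  (G : 'M[F]_(k, n)) (hG : row_free G) (hGKP : GKP iota l G)
  (V : 'I_l -> 'M[K]_n) (hV : forall i, (\rank (V i) <= k)%N) :
  (exists P : {set {set 'I_l}}, partition P [set: 'I_l] /\
     (\rank (\bigcap_(i < l) <<GV iota G (V i)>>)%MS)%:Z = partition_value k V P)
  /\
  (forall P : {set {set 'I_l}}, partition P [set: 'I_l] ->
     partition_value k V P <= (\rank (\bigcap_(i < l) <<GV iota G (V i)>>)%MS)%:Z).
Proof.
have lower P := partition_value_le_rank (P := P) hGKP.1 hG hkn hV.
split=> [|P]; last exact: lower.
have g_le S : S != set0 -> (bigcap_rank V S <= k)%N.
  case/set0Pn=> i iS; exact: leq_trans (mxrankS (bigcapmx_inf i iS (submx_refl _))) (hV i).
have [c [P [c_feas P_part P_tight]]] :=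
  exists_tight_partition g_le (fun S S' _ => bigcap_rank_supermodular V S S').
have upper := mxrank_bigcap_GV_le hl hGKP c_feas.
set d := \rank _ in upper lower *.
have [sum_small | sum_large] := leqP (\sum_i c i) k.
  exists P; split=> //; have := lower P P_part.
  rewrite (partition_value_tight P_part P_tight).
  by move: upper; rewrite (minn_idPr sum_small); lia.
have setT_part : partition [set [set: 'I_l]] [set: 'I_l].
  rewrite /partition cover1 trivIset1 eqxx in_set1 eq_sym /=.
  by apply/set0Pn; exists (Ordinal hl).
exists [set [set: 'I_l]]; split=> //; apply/eqP; rewrite eq_le lower //.
move: upper; rewrite (minn_idPl (ltnW sum_large)) /partition_value big_set1.
by rewrite cards1 subrr mul0r subr0 lez_nat; lia.
Qed.
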